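(* Let $t\geq 4$ be an integer and let $H$ be a $3$-graph on $t$ vertices with at least $\binom{t-1}{3}+\binom{t-2}{2}+2$ edges. Then $H$ is not $\lambda$-perfect.
   Context: For a $3$-graph $G$ on vertex set $[n]$ and $\vec x\in\Delta=\{\vec x\in[0,1]^n:\sum_i x_i=1\}$, put $\lambda(G,\vec x)=\sum_{e\in E(G)}\prod_{i\in e}x_i$ and $\lambda(G)=\max_{\vec x\in\Delta}\lambda(G,\vec x)$ (the Lagrangian). $G$ is $F$-free if it contains no subgraph isomorphic to $F$. The Lagrangian density is $\pi_\lambda(F)=\sup\{3!\,\lambda(G): G\text{ is an }F\text{-free }3\text{-graph}\}$. $K_m^3$ is the complete $3$-graph on $m$ vertices. A $3$-graph $H$ on $t$ vertices is $\lambda$-perfect if $\pi_\lambda(H)=3!\,\lambda(K_{t-1}^3)$. *)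

From mathcomp Require Import all_boot all_order all_algebra.
From mathcomp Require Import classical_sets reals.
Set Implicit Arguments. Unset Strict Implicit. Unset Printing Implicit Defensive.
Import Order.TTheory GRing.Theory Num.Theory.
Local Open Scope ring_scope.
Local Open Scope classical_set_scope.

Definition is3graph (n : nat) (G : {set {set 'I_n}}) : Prop :=
  forall e, e \in G -> #|e| = 3%N.

Definition contains (t n : nat) (F : {set {set 'I_t}}) (G : {set {set 'I_n}}) : Prop :=
  exists f : 'I_t -> 'I_n, injective f /\ forall e, e \in F -> f @: e \in G.

Definition Ffree (t n : nat) (F : {set {set 'I_t}}) (G : {set {set 'I_n}}) : Prop :=
  ~ contains F G.

Definition simplex (R : realType) (n : nat) : set ('I_n -> R) :=
  [set x | (forall i, 0 <= x i) /\ \sum_(i < n) x i = 1].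

Definition lagr_val (R : realType) (n : nat) (G : {set {set 'I_n}}) (x : 'I_n -> R) : R :=
  \sum_(e in G) \prod_(i in e) x i.

(* lambda(G) = max over the simplex (written as the supremum, which is attained). *)
Definition lagrangian (R : realType) (n : nat) (G : {set {set 'I_n}}) : R :=
  sup [set @lagr_val R n G x | x in @simplex R n].

Definition K3 (m : nat) : {set {set 'I_m}} := [set e : {set 'I_m} | #|e| == 3%N].

Definition lagr_density (R : realType) (t : nat) (F : {set {set 'I_t}}) : R :=
  sup [set y : R | exists (n : nat) (G : {set {set 'I_n}}),
         is3graph G /\ Ffree F G /\ y = 6%:R * @lagrangian R n G].

Definition lambda_perfect (R : realType) (t : nat) (H : {set {set 'I_t}}) : Prop :=
  @lagr_density R t H = 6%:R * @lagrangian R t.-1 (K3 t.-1).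

(* Write m = t - 1.  By Maclaurin's inequality every 3-graph on m vertices has
   Lagrangian at most that of K_m^3, i.e. 3! lambda <= (m-1)(m-2)/m^2, so
   lambda-perfection of H would bound 3! lambda(G) by this value for every H-free G.
   Let G be K_m^3 plus an apex vertex whose link is K_(m-1)^2 plus one edge through
   the remaining vertex.  G has C(m,3) + C(m-1,2) + 1 < |H| edges, hence is H-free;
   yet its link has more than C(m-1,2) edges, so moving a small weight e onto the
   apex (and (1-e)/m onto each other vertex) raises 3! lambda(G, x) above
   (m-1)(m-2)/m^2. *)

From mathcomp Require Import all_boot all_order all_algebra.
From mathcomp Require Import classical_sets reals.
From mathcomp Require Import ring lra.
Set Implicit Arguments. Unset Strict Implicit. Unset Printing Implicit Defensive.
Import Order.TTheory GRing.Theory Num.Theory.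
Local Open Scope ring_scope.

Section SubsetsOfOrdS.
Variable n : nat.
Implicit Types (A : {set 'I_n}) (e : {set 'I_n.+1}).

Lemma ord0_notin_imset_lift A : ord0 \notin lift ord0 @: A.
Proof. by apply/imsetP => -[i _] /eqP; rewrite eq_liftF. Qed.

Lemma preimset_lift_imsetK A : lift ord0 @^-1: (lift ord0 @: A) = A.
Proof. by apply/setP => i; rewrite inE mem_imset //; apply: lift_inj. Qed.

Lemma preimset_lift_setU1K A : lift ord0 @^-1: (ord0 |: lift ord0 @: A) = A.
Proof.
by apply/setP => i; rewrite !inE eq_sym eq_liftF mem_imset //; apply: lift_inj.
Qed.

Lemma imset_lift_preimset e : lift ord0 @: (lift ord0 @^-1: e) = e :\ ord0.
Proof.
apply/setP => j; rewrite !inE; have [i ->|->] := unliftP ord0 j.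
  by rewrite mem_imset ?inE 1?eq_sym ?eq_liftF //; apply: lift_inj.
by rewrite eqxx (negbTE (ord0_notin_imset_lift _)).
Qed.

Lemma big_subsets_recl (V : nmodType) k (F : {set 'I_n.+1} -> V) :
  \sum_(e : {set 'I_n.+1} | #|e| == k.+1) F e =
  \sum_(A : {set 'I_n} | #|A| == k.+1) F (lift ord0 @: A) +
  \sum_(A : {set 'I_n} | #|A| == k) F (ord0 |: lift ord0 @: A).
Proof.
have card_lift A : #|lift ord0 @: A| = #|A| by apply/card_imset/lift_inj.
rewrite (bigID (fun e => ord0 \in e)) /= addrC; congr (_ + _).
- rewrite (reindex_onto (fun A => lift ord0 @: A) (fun e => lift ord0 @^-1: e)) /=.
    apply: eq_bigl => A.
    by rewrite card_lift preimset_lift_imsetK ord0_notin_imset_lift eqxx !andbT.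
  move=> e /andP[_ e0]; rewrite imset_lift_preimset.
  by apply/setP => j; rewrite !inE; case: eqP => // ->; rewrite (negbTE e0).
- rewrite (reindex_onto (fun A => ord0 |: lift ord0 @: A) (fun e => lift ord0 @^-1: e)) /=.
    apply: eq_bigl => A.
    by rewrite cardsU1 ord0_notin_imset_lift card_lift setU11 preimset_lift_setU1K eqxx !andbT.
  by move=> e /andP[_ e0]; rewrite imset_lift_preimset finset.setD1K.
Qed.

End SubsetsOfOrdS.

Section ElementarySymmetric.
Variable R : comPzRingType.

Definition elem_sym n k (x : 'I_n -> R) :=
  \sum_(A : {set 'I_n} | #|A| == k) \prod_(i in A) x i.

Definition pow_sum n k (x : 'I_n -> R) := \sum_i x i ^+ k.

Lemma elem_sym0 n (x : 'I_n -> R) : elem_sym 0 x = 1.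
Proof. by rewrite /elem_sym (big_pred1 finset.set0) ?big_set0 // => A; rewrite cards_eq0. Qed.

Lemma elem_sym_ord0 k (x : 'I_0 -> R) : elem_sym k.+1 x = 0.
Proof.
rewrite /elem_sym big_pred0 // => A.
by apply/negbTE; rewrite neq_ltn (leq_ltn_trans (max_card _)) ?card_ord.
Qed.

Lemma elem_symS n k (x : 'I_n.+1 -> R) :
  elem_sym k.+1 x = elem_sym k.+1 (x \o lift ord0) + x ord0 * elem_sym k (x \o lift ord0).
Proof.
have lift_inj0 (A : {set 'I_n}) : {in A &, injective (lift ord0)}.
  by move=> i j _ _; apply: lift_inj.
rewrite /elem_sym big_subsets_recl mulr_sumr; congr (_ + _); apply: eq_bigr => A _.
  by rewrite big_imset.
by rewrite big_setU1 ?ord0_notin_imset_lift //= big_imset.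
Qed.

Lemma pow_sumS n k (x : 'I_n.+1 -> R) :
  pow_sum k x = x ord0 ^+ k + pow_sum k (x \o lift ord0).
Proof. exact: big_ord_recl. Qed.

Lemma pow_sum1 n (x : 'I_n -> R) : pow_sum 1 x = \sum_i x i.
Proof. by apply: eq_bigr => i _; rewrite expr1. Qed.

Lemma pow_sum_ord0 k (x : 'I_0 -> R) : pow_sum k x = 0.
Proof. exact: big_ord0. Qed.

Lemma elem_sym1E n (x : 'I_n -> R) : elem_sym 1 x = pow_sum 1 x.
Proof.
elim: n x => [|n IH] x; first by rewrite elem_sym_ord0 pow_sum_ord0.
by rewrite elem_symS pow_sumS IH elem_sym0; ring.
Qed.

Lemma elem_sym2E n (x : 'I_n -> R) :
  2 * elem_sym 2 x = pow_sum 1 x ^+ 2 - pow_sum 2 x.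
Proof.
elim: n x => [|n IH] x; first by rewrite elem_sym_ord0 !pow_sum_ord0; ring.
by rewrite elem_symS !pow_sumS mulrDr IH mulrCA elem_sym1E; ring.
Qed.

Lemma elem_sym3E n (x : 'I_n -> R) :
  6 * elem_sym 3 x = pow_sum 1 x ^+ 3 - 3 * pow_sum 1 x * pow_sum 2 x + 2 * pow_sum 3 x.
Proof.
elim: n x => [|n IH] x; first by rewrite elem_sym_ord0 !pow_sum_ord0; ring.
rewrite elem_symS !pow_sumS mulrDr IH.
have -> : 6 * (x ord0 * elem_sym 2 (x \o lift ord0)) =
          3 * x ord0 * (2 * elem_sym 2 (x \o lift ord0)) by ring.
by rewrite elem_sym2E; ring.
Qed.

Lemma elem_sym_card n (x : 'I_n -> R) : elem_sym n x = \prod_i x i.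
Proof.
rewrite /elem_sym (big_pred1 finset.setT) => [|A /=].
  by apply: eq_bigl => i; rewrite inE.
have := max_card A; rewrite card_ord => leAn.
by rewrite eqEcard finset.subsetT cardsT card_ord eqn_leq leAn.
Qed.

End ElementarySymmetric.

Section Maclaurin.
Variables (R : realFieldType) (m : nat) (x : 'I_m -> R).
Hypotheses (x_ge0 : forall i, 0 <= x i) (x_sum1 : pow_sum 1 x = 1).

Lemma coord_le1 i : x i <= 1.
Proof.
rewrite -x_sum1 /pow_sum (bigD1 i) //= expr1 lerDl.
by apply: sumr_ge0 => j _; rewrite expr1.
Qed.

Lemma elem_sym3_le1 : 6 * elem_sym 3 x <= 1.
Proof.
have p3_le_p2 : pow_sum 3 x <= pow_sum 2 x.
  by apply: ler_sum => i _; have := coord_le1 i; have := x_ge0 i; nra.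
have p2_ge0 : 0 <= pow_sum 2 x by apply: sumr_ge0 => i _; apply: sqr_ge0.
rewrite elem_sym3E x_sum1; lra.
Qed.

Lemma elem_sym3_le_uniform4 : (4 <= m)%N ->
  6 * elem_sym 3 x <= (m%:R - 1) * (m%:R - 2) / m%:R ^+ 2.
Proof.
move=> m_ge4; set mu := m%:R^-1 : R.
have m4 : 4 <= m%:R :> R by rewrite (ler_nat R 4 m).
have m_neq0 : m%:R != 0 :> R by rewrite pnatr_eq0 -lt0n (leq_trans _ m_ge4).
have mu_ge0 : 0 <= mu by rewrite invr_ge0 ler0n.
have mu_le : mu <= 4^-1 by rewrite lef_pV2 ?posrE //; lra.
(* 6 e_3(x) = 6 e_3(mu, ..., mu) - sum_i (x_i - mu)^2 (3 - 4 mu - 2 x_i), and the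
   summands are nonnegative once mu <= 1/4; for m = 3 they need not be, and
   AM-GM takes over (elem_sym3_le_ord3). *)
have expand : \sum_i (x i - mu) ^+ 2 * (3 - 4 * mu - 2 * x i) =
    3 * pow_sum 2 x - 2 * pow_sum 3 x + (6 * mu ^+ 2 - 6 * mu) * pow_sum 1 x
    + (m%:R * mu) * (3 * mu - 4 * mu ^+ 2).
  have -> : m%:R * mu * (3 * mu - 4 * mu ^+ 2) = \sum_(i < m) mu * (3 * mu - 4 * mu ^+ 2).
    by rewrite sumr_const card_ord -mulrA mulr_natl.
  rewrite /pow_sum !mulr_sumr -sumrN -!big_split /=.
  by apply: eq_bigr => i _; ring.
have sos_ge0 : 0 <= \sum_i (x i - mu) ^+ 2 * (3 - 4 * mu - 2 * x i).
  apply: sumr_ge0 => i _; rewrite mulr_ge0 ?sqr_ge0 //.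
  by have := coord_le1 i; lra.
rewrite expand x_sum1 mulfV // in sos_ge0.
have -> : (m%:R - 1) * (m%:R - 2) / m%:R ^+ 2 = 1 - 3 * mu + 2 * mu ^+ 2 by rewrite /mu; field.
rewrite elem_sym3E x_sum1; lra.
Qed.

End Maclaurin.

Lemma elem_sym3_le_ord3 (R : realFieldType) (x : 'I_3 -> R) :
  (forall i, 0 <= x i) -> pow_sum 1 x = 1 -> 6 * elem_sym 3 x <= 2 / 9.
Proof.
move=> x_ge0 x_sum1; rewrite elem_sym_card.
have [amgm _] := @leif_AGM R 'I_3 predT x (fun i _ => x_ge0 i).
move: amgm.
have -> : \sum_(i in predT) x i = 1 by rewrite -x_sum1; apply: eq_bigr => i _; rewrite expr1.
rewrite cardT size_enum_ord => amgm.
have -> : 2 / 9 = 6 * (1 / 3) ^+ 3 :> R by field.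
by rewrite ler_pM2l.
Qed.

Lemma elem_sym3_le_uniform (R : realFieldType) m (x : 'I_m -> R) : (3 <= m)%N ->
  (forall i, 0 <= x i) -> pow_sum 1 x = 1 ->
  6 * elem_sym 3 x <= (m%:R - 1) * (m%:R - 2) / m%:R ^+ 2.
Proof.
rewrite leq_eqVlt => /orP[/eqP m3|m4] x_ge0 x_sum1; last exact: elem_sym3_le_uniform4.
subst m; have -> : (3%:R - 1) * (3%:R - 2) / 3%:R ^+ 2 = 2 / 9 :> R by field.
exact: elem_sym3_le_ord3.
Qed.

Lemma sup_le_ge0 (R : realType) (S : set R) c : 0 <= c -> ubound S c -> sup S <= c.
Proof.
move=> c_ge0 Sc; have [->|/set0P S_neq0] := eqVneq S set0; first by rewrite sup0.
exact: ge_sup.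
Qed.

Lemma Ffree_card_lt t n (F : {set {set 'I_t}}) (G : {set {set 'I_n}}) :
  (#|G| < #|F|)%N -> Ffree F G.
Proof.
move=> GF [f [f_inj FG]]; move: GF; rewrite ltnNge => /negP; apply.
rewrite -(card_imset _ (imset_inj f_inj)); apply: subset_leq_card.
by apply/fintype.subsetP => _ /imsetP[e eF ->]; apply: FG.
Qed.

Section Lagrangian.
Variable R : realType.

Lemma lagr_val_le_elem_sym3 n (G : {set {set 'I_n}}) (x : 'I_n -> R) :
  is3graph G -> (forall i, 0 <= x i) -> lagr_val G x <= elem_sym 3 x.
Proof.
move=> G3 x_ge0; rewrite /lagr_val /elem_sym big_mkcond [leRHS]big_mkcond /=.
apply: ler_sum => e _; case: ifP => [eG|_]; first by rewrite G3.
by case: ifP => // _; apply: prodr_ge0.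
Qed.

Lemma lagr_val_K3 m (x : 'I_m -> R) : lagr_val (K3 m) x = elem_sym 3 x.
Proof. by apply: eq_bigl => e; rewrite inE. Qed.

Lemma lagr_val_le_sixth n (G : {set {set 'I_n}}) (x : 'I_n -> R) :
  is3graph G -> simplex x -> 6 * lagr_val G x <= 1.
Proof.
move=> G3 [x_ge0 x_sum1]; rewrite -pow_sum1 in x_sum1.
have := elem_sym3_le1 x_ge0 x_sum1; have := lagr_val_le_elem_sym3 G3 x_ge0; lra.
Qed.

Lemma lagrangian_le n (G : {set {set 'I_n}}) c : 0 <= c ->
  (forall x, simplex x -> lagr_val G x <= c) -> lagrangian R G <= c.
Proof. by move=> c_ge0 Gc; apply: sup_le_ge0 => // _ [x /Gc ? <-]. Qed.

Lemma lagr_val_le_lagrangian n (G : {set {set 'I_n}}) (x : 'I_n -> R) :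
  is3graph G -> simplex x -> lagr_val G x <= lagrangian R G.
Proof.
move=> G3 x_simplex; apply: ub_le_sup; last by exists x.
by exists 6^-1 => _ [y /(lagr_val_le_sixth G3) ? <-]; lra.
Qed.

Lemma lagrangian_le_density t (F : {set {set 'I_t}}) n (G : {set {set 'I_n}}) :
  is3graph G -> Ffree F G -> 6 * lagrangian R G <= lagr_density R F.
Proof.
move=> G3 FG; apply: ub_le_sup; last by exists n, G.
exists 1 => _ [n' [G' [G'3 [_ ->]]]].
suff : lagrangian R G' <= 6^-1 by lra.
by apply: lagrangian_le => [|x /(lagr_val_le_sixth G'3)]; lra.
Qed.

Lemma lagrangian_K3_le m : (3 <= m)%N ->
  6 * lagrangian R (K3 m) <= (m%:R - 1) * (m%:R - 2) / m%:R ^+ 2.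
Proof.
move=> m_ge3; have m3 : 3 <= m%:R :> R by rewrite (ler_nat R 3 m).
rewrite -ler_pdivlMl ?ltr0n //; apply: lagrangian_le.
  by rewrite mulr_ge0 ?invr_ge0 ?ler0n // divr_ge0 ?sqr_ge0 // mulr_ge0 //; lra.
move=> x [x_ge0 x_sum1]; rewrite -pow_sum1 in x_sum1.
by rewrite ler_pdivlMl ?ltr0n // lagr_val_K3 elem_sym3_le_uniform.
Qed.

End Lagrangian.

Lemma natr_bin2 (R : comPzRingType) n : 2 * 'C(n, 2)%:R = n%:R * (n%:R - 1) :> R.
Proof.
elim: n => [|n IH]; first by rewrite /= !(mulr0, mul0r).
by rewrite binS bin1 natrD mulrDr IH -addn1 natrD; ring.
Qed.

Lemma natr_bin3 (R : comPzRingType) n :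
  6 * 'C(n, 3)%:R = n%:R * (n%:R - 1) * (n%:R - 2) :> R.
Proof.
elim: n => [|n IH]; first by rewrite /= !(mulr0, mul0r).
have -> : 6 * 'C(n.+1, 3)%:R = 6 * 'C(n, 3)%:R + 3 * (2 * 'C(n, 2)%:R) :> R.
  by rewrite binS natrD; ring.
by rewrite IH natr_bin2 -addn1 natrD; ring.
Qed.

Definition cone n (L : {set {set 'I_n}}) : {set {set 'I_n.+1}} :=
  [set e : {set 'I_n.+1} | (#|e| == 3%N) && ((ord0 \in e) ==> (lift ord0 @^-1: e \in L))].

Section Cone.
Variables (n : nat) (L : {set {set 'I_n}}).
Hypothesis L2 : forall B, B \in L -> #|B| = 2%N.

Lemma cone_is3graph : is3graph (cone L).
Proof. by move=> e; rewrite inE => /andP[/eqP]. Qed.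

Lemma sum_cone_prod (R : comPzSemiRingType) (x : 'I_n.+1 -> R) c u :
  x ord0 = c -> (forall i, x (lift ord0 i) = u) ->
  \sum_(e in cone L) \prod_(i in e) x i = 'C(n, 3)%:R * u ^+ 3 + #|L|%:R * (c * u ^+ 2).
Proof.
move=> x0 x_lift.
have prod_lift (A : {set 'I_n}) : \prod_(i in lift ord0 @: A) x i = u ^+ #|A|.
  rewrite big_imset /=; last by move=> i j _ _; apply: lift_inj.
  by rewrite (eq_bigr (fun=> u)) ?prodr_const // => i _; rewrite x_lift.
have -> : \sum_(e in cone L) \prod_(i in e) x i = \sum_(e : {set 'I_n.+1} | #|e| == 3%N)
    (if (ord0 \in e) ==> (lift ord0 @^-1: e \in L) then \prod_(i in e) x i else 0).
  by rewrite -big_mkcondr; apply: eq_bigl => e; rewrite inE.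
rewrite big_subsets_recl; congr (_ + _).
  rewrite (eq_bigr (fun=> u ^+ 3)) => [|A /eqP A3]; last first.
    by rewrite (negbTE (ord0_notin_imset_lift A)) prod_lift A3.
  rewrite sumr_const mulr_natl -[n in 'C(n, _)]card_ord -card_draws.
  by congr (_ *+ _); apply: eq_card => A; rewrite inE.
rewrite (eq_bigr (fun B => if B \in L then c * u ^+ 2 else 0)) => [|B /eqP B2]; last first.
  rewrite setU11 preimset_lift_setU1K /=; case: ifP => // _.
  by rewrite big_setU1 ?ord0_notin_imset_lift //= x0 prod_lift B2.
rewrite -big_mkcondr sumr_const mulr_natl; congr (_ *+ _); apply: eq_card => B.
by rewrite unfold_in andb_idl // => /L2 ->.
Qed.

Lemma card_cone : #|cone L| = ('C(n, 3) + #|L|)%N.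
Proof.
have := @sum_cone_prod nat (fun=> 1%N) 1%N 1%N erefl (fun=> erefl).
rewrite (eq_bigr (fun=> 1%N)) => [|e _]; last by rewrite prod_nat_const exp1n.
by rewrite sum1_card !expr1n !natn !mulr1.
Qed.

End Cone.

Lemma cone_gain (R : realFieldType) (a e : R) : 0 <= a -> 0 < e -> (a + 4) * e <= 1 ->
  a < (1 - e) ^+ 2 * (a * (1 + 2 * e) + 6 * e).
Proof.
move=> a_ge0 e_gt0 ae_le1.
have -> : (1 - e) ^+ 2 * (a * (1 + 2 * e) + 6 * e) =
          a + 3 * e * (2 - (a + 4) * e) + (2 * a + 6) * e ^+ 3 by ring.
have : 0 < 3 * e * (2 - (a + 4) * e) by apply: mulr_gt0; lra.
have : 0 <= (2 * a + 6) * e ^+ 3 by apply: mulr_ge0; [lra | apply/exprn_ge0/ltW].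
lra.
Qed.

Section ConeBeatsClique.
Variables (R : realType) (n : nat) (L : {set {set 'I_n}}).
Hypotheses (n_gt0 : (0 < n)%N) (L2 : forall B, B \in L -> #|B| = 2%N).

Let M : R := n%:R.
Let a : R := (M - 1) * (M - 2).

Definition apex_weight (e : R) (i : 'I_n.+1) : R := if i == ord0 then e else (1 - e) / M.

Let M_gt0 : 0 < M. Proof. by rewrite ltr0n. Qed.

Lemma apex_weight_simplex e : 0 <= e <= 1 -> simplex (apex_weight e).
Proof.
move=> /andP[e_ge0 e_le1]; split => [i|].
  by rewrite /apex_weight; case: eqP => // _; rewrite divr_ge0 ?subr_ge0 // ltW ?M_gt0.
rewrite big_ord_recl /apex_weight eqxx (eq_bigr (fun=> (1 - e) / M)) //=.
rewrite sumr_const cardT size_enum_ord -mulr_natl mulrCA divff ?mulr1 ?subrKC //.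
by rewrite gt_eqF ?M_gt0.
Qed.

Let natr_bin2_pred : 2 * 'C(n.-1, 2)%:R = a.
Proof. by rewrite natr_bin2 -subn1 natrB // /a /M; ring. Qed.

Lemma lagr_val_cone_apex_ge e : ('C(n.-1, 2) < #|L|)%N -> 0 <= e ->
  (1 - e) ^+ 2 * (a * (1 + 2 * e) + 6 * e) / M ^+ 2 <=
  6 * lagr_val (cone L) (apex_weight e).
Proof.
move=> L_big e_ge0.
rewrite /lagr_val (sum_cone_prod L2 (c := e) (u := (1 - e) / M)); last first.
- by move=> i; rewrite /apex_weight eq_sym eq_liftF.
- by rewrite /apex_weight eqxx.
set u := (1 - e) / M.
have L_ge : a + 2 <= 2 * #|L|%:R.
  have : ('C(n.-1, 2).+1)%:R <= #|L|%:R :> R by rewrite ler_nat.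
  by rewrite -natr_bin2_pred -addn1 natrD; lra.
have six_binom3 : 6 * 'C(n, 3)%:R = M * a by rewrite natr_bin3 /a /M; ring.
have -> : (1 - e) ^+ 2 * (a * (1 + 2 * e) + 6 * e) / M ^+ 2 =
          M * a * u ^+ 3 + 3 * (a + 2) * (e * u ^+ 2).
  by rewrite /u; field; rewrite gt_eqF ?M_gt0.
have -> : 6 * ('C(n, 3)%:R * u ^+ 3 + #|L|%:R * (e * u ^+ 2)) =
          M * a * u ^+ 3 + 6 * #|L|%:R * (e * u ^+ 2) by rewrite -six_binom3; ring.
rewrite lerD2l.
by rewrite ler_wpM2r ?(mulr_ge0 e_ge0 (sqr_ge0 _)) //; lra.
Qed.

Lemma lagrangian_cone_gt : ('C(n.-1, 2) < #|L|)%N -> a / M ^+ 2 < 6 * lagrangian R (cone L).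
Proof.
move=> L_big; set e := (a + 4)^-1.
have a_ge0 : 0 <= a by rewrite -natr_bin2_pred mulr_ge0 ?ler0n.
have e_gt0 : 0 < e by rewrite invr_gt0; lra.
have ae : (a + 4) * e = 1 by rewrite mulfV // gt_eqF //; lra.
have e_le1 : 0 <= e <= 1 by apply/andP; split; nra.
have lagr_ge := lagr_val_le_lagrangian (@cone_is3graph _ L) (apex_weight_simplex e_le1).
have apex_ge := lagr_val_cone_apex_ge L_big (ltW e_gt0).
have : a / M ^+ 2 < (1 - e) ^+ 2 * (a * (1 + 2 * e) + 6 * e) / M ^+ 2.
  by rewrite ltr_pM2r ?invr_gt0 ?exprn_gt0 ?M_gt0 // cone_gain ?ae.
lra.
Qed.

End ConeBeatsClique.

Definition clique_plus_edge p : {set {set 'I_p.+2}} :=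
  [set ord0; ord_max] |: [set B : {set 'I_p.+2} | B \subset [set~ ord0] & #|B| == 2%N].

Lemma card_clique_plus_edge p : #|clique_plus_edge p| = ('C(p.+1, 2) + 1)%N.
Proof.
rewrite cardsU1 cards_draws cardsC1 card_ord addnC; congr (_ + _)%N.
have edge_through0 : ~~ ([set ord0; ord_max] \subset [set~ ord0 : 'I_p.+2]).
  by apply/fintype.subsetPn; exists ord0; rewrite !inE ?eqxx.
by rewrite inE (negbTE edge_through0).
Qed.

Lemma clique_plus_edge_card2 p B : B \in clique_plus_edge p -> #|B| = 2%N.
Proof. by rewrite !inE => /orP[/eqP -> | /andP[_ /eqP]]; rewrite ?cards2. Qed.

Theorem mainTheorem7 (R : realType) (t : nat) (H : {set {set 'I_t}}) :
  (4 <= t)%N -> is3graph H ->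
  ('C(t.-1, 3) + 'C(t.-2, 2) + 2 <= #|H|)%N ->
  ~ @lambda_perfect R t H.
Proof.
case: t H => [|[|[|[|p]]]] H //= _ _ H_big H_perfect.
pose L := clique_plus_edge p.+1.
have L2 : forall B, B \in L -> #|B| = 2%N by apply: clique_plus_edge_card2.
have card_L := card_clique_plus_edge p.+1.
have H_free : Ffree H (cone L).
  by apply: Ffree_card_lt; rewrite card_cone // card_L addnA addn1 -addn2.
have := lagrangian_le_density R (@cone_is3graph _ L) H_free.
have := @lagrangian_cone_gt R p.+3 L isT L2; rewrite card_L addn1 ltnSn => /(_ isT).
have := @lagrangian_K3_le R p.+3 isT.
rewrite /lambda_perfect /= in H_perfect; rewrite H_perfect => K_le cone_gt cone_le.
by have := lt_le_trans cone_gt (le_trans cone_le K_le); rewrite ltxx.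
Qed.
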